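(* Let $\alpha>0$, $t_0>0$ and $x_0,v_0\in\mathcal H$. Assume $(u(\cdot),v(\cdot)):[t_0,+\infty)\to\mathcal H\times\mathcal H$ is absolutely continuous on every compact subinterval and solves the differential inclusion $$(\dot u(t),\dot v(t))\in G(t,u(t),v(t))\ \text{ for almost all }t>t_0,\qquad (u(t_0),v(t_0))=(x_0,v_0),$$ where $G(t,u,v)=\{v\}\times\big(-\frac{\alpha}{t}v-\arg\min_{g\in C(u)}\langle g,-v\rangle\big)$. Then $x(t):=u(t)$ satisfies $$\tfrac{\alpha}{t}\dot x(t)+\operatorname{proj}_{C(x(t))+\ddot x(t)}(0)=0$$ for almost all $t\in[t_0,+\infty)$, where $\dot x=v$ and $\ddot x=\dot v$, together with $x(t_0)=x_0$ and $\dot x(t_0)=v_0$.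
   Context: $\mathcal H$ is a real Hilbert space. $f_1,\dots,f_m:\mathcal H\to\mathbb R$ are convex and continuously differentiable. $C(u)=\operatorname{co}\{\nabla f_i(u):i=1,\dots,m\}$. For a closed convex $K$, $\operatorname{proj}_K(y)=\arg\min_{w\in K}\|w-y\|^2$. *)

From HB Require Import structures.
From mathcomp Require Import all_boot all_order all_algebra.
From mathcomp Require Import all_classical all_reals all_analysis.
Set Implicit Arguments. Unset Strict Implicit. Unset Printing Implicit Defensive.
Import Order.TTheory GRing.Theory Num.Theory.
Import numFieldNormedType.Exports.
Local Open Scope classical_set_scope.
Local Open Scope ring_scope.

(* A real Hilbert space: a complete normed space over R whose norm is induced
   by a (bilinear, symmetric) inner product [ip]. *)
Definition is_inner_product {R : realType} {H : completeNormedModType R}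
  (ip : H -> H -> R) : Prop :=
  [/\ (forall x y, ip x y = ip y x),
      (forall a x y z, ip (a *: x + y) z = a * ip x z + ip y z) &
      (forall x, ip x x = `|x| ^+ 2)].

Definition convex_fun {R : realType} {H : completeNormedModType R}
  (f : H -> R) : Prop :=
  forall (x y : H) (l : R), 0 <= l <= 1 ->
    f (l *: x + (1 - l) *: y) <= l * f x + (1 - l) * f y.

Definition is_C1_gradient {R : realType} {H : completeNormedModType R}
  (ip : H -> H -> R) (f : H -> R) (g : H -> H) : Prop :=
  (forall x, differentiable f x /\ forall h, 'd f x h = ip (g x) h)
  /\ continuous g.

Definition co_fin {R : realType} {H : completeNormedModType R} {m : nat}
  (p : 'I_m -> H) : set H :=
  [set y | exists lam : 'I_m -> R, (forall i, 0 <= lam i) /\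
     \sum_(i < m) lam i = 1 /\ y = \sum_(i < m) lam i *: p i].

Definition Cset {R : realType} {H : completeNormedModType R} {m : nat}
  (grad : 'I_m -> H -> H) (u : H) : set H := co_fin (fun i => grad i u).

Definition argmin {R : realType} {T : Type} (K : set T) (phi : T -> R) : set T :=
  [set w | K w /\ forall w', K w' -> phi w <= phi w'].

(* proj_K(y) = arg min_{w in K} ||w - y||^2 (a chosen element of the argmin set;
   for nonempty closed convex K it is the unique minimizer). *)
Definition proj_onto {R : realType} {H : completeNormedModType R}
  (K : set H) (y : H) : H := xget 0 (argmin K (fun w => `|w - y| ^+ 2)).

Definition translate {R : realType} {H : completeNormedModType R}
  (K : set H) (w : H) : set H := [set c + w | c in K].

Definition abs_cont_on {R : realType} {H : completeNormedModType R}
  (f : R -> H) (a b : R) : Prop :=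
  forall eps : R, 0 < eps -> exists2 delta : R, 0 < delta &
    forall (n : nat) (s e : nat -> R),
      (forall k, (k < n)%N -> a <= s k /\ s k <= e k /\ e k <= b) ->
      (forall k, (k.+1 < n)%N -> e k <= s k.+1) ->
      \sum_(k < n) (e k - s k) < delta ->
      \sum_(k < n) `|f (e k) - f (s k)| < eps.

Definition loc_abs_cont {R : realType} {H : completeNormedModType R}
  (f : R -> H) (t0 : R) : Prop :=
  forall a b, t0 <= a -> a <= b -> abs_cont_on f a b.

Definition Gsecond {R : realType} {H : completeNormedModType R} {m : nat}
  (ip : H -> H -> R) (grad : 'I_m -> H -> H) (alpha t : R) (u v : H) : set H :=
  [set - ((alpha / t) *: v) - g | g in argmin (Cset grad u) (fun g => ip g (- v))].

From HB Require Import structures.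
From mathcomp Require Import all_boot all_order all_algebra.
From mathcomp Require Import all_classical all_reals all_analysis.
From mathcomp Require Import ring lra.
Set Implicit Arguments.
Unset Strict Implicit.
Unset Printing Implicit Defensive.

Import Order.TTheory GRing.Theory Num.Theory.
Import numFieldNormedType.Exports.
Local Open Scope classical_set_scope.
Local Open Scope ring_scope.

(* Write [a = alpha / t] and [w = - a v - g] with [g] a minimizer of [<., -v>]
   over [C(u)].  The point [- a v] lies in [C(u) + w], and for [c] in [C(u)]
   the optimality of [g] gives [<(c + w) - (- a v), - a v> = a <c - g, -v> >= 0]:
   this variational inequality characterizes [- a v] as the projection of [0]
   onto [C(u) + w].  The single point [t0] is negligible. *)

Section InnerProduct.
Variables (R : realType) (H : completeNormedModType R) (ip : H -> H -> R).
Hypothesis ip_inner : is_inner_product ip.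

Lemma ipC x y : ip x y = ip y x.
Proof. by case: ip_inner. Qed.

Lemma ip_normr2 x : ip x x = `|x| ^+ 2.
Proof. by case: ip_inner => _ _ ->. Qed.

Lemma ip0l z : ip 0 z = 0.
Proof.
case: ip_inner => _ ipl _; have := ipl 1 0 0 z.
by rewrite scaler0 addr0 mul1r => /eqP; rewrite addrC -subr_eq subrr eq_sym => /eqP.
Qed.

Lemma ipDl x y z : ip (x + y) z = ip x z + ip y z.
Proof. by case: ip_inner => _ ipl _; rewrite -[x]scale1r ipl mul1r scale1r. Qed.

Lemma ipZl a x z : ip (a *: x) z = a * ip x z.
Proof. by case: ip_inner => _ ipl _; rewrite -[a *: x]addr0 ipl ip0l addr0. Qed.

Lemma ipBl x y z : ip (x - y) z = ip x z - ip y z.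
Proof. by rewrite ipDl -scaleN1r ipZl mulN1r. Qed.

Lemma ipDr x y z : ip z (x + y) = ip z x + ip z y.
Proof. by rewrite ipC ipDl !(ipC z). Qed.

Lemma normrD2 x y : `|x + y| ^+ 2 = `|x| ^+ 2 + 2 * ip x y + `|y| ^+ 2.
Proof. by rewrite -!ip_normr2 ipDl !ipDr (ipC y x); ring. Qed.

Lemma proj_onto_eq (K : set H) (y p : H) :
  K p -> (forall k, K k -> 0 <= ip (k - p) (p - y)) -> proj_onto K y = p.
Proof.
move=> Kp obtuse.
have dist_gap k : K k -> `|k - y| ^+ 2 - `|p - y| ^+ 2
                          = `|k - p| ^+ 2 + 2 * ip (k - p) (p - y).
  move=> _; have -> : k - y = (k - p) + (p - y) by rewrite addrA subrK.
  by rewrite normrD2; ring.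
have p_min : argmin K (fun w => `|w - y| ^+ 2) p.
  split=> // k Kk; rewrite -subr_ge0 dist_gap //.
  by apply: addr_ge0; [exact: sqr_ge0 | rewrite mulr_ge0 ?obtuse].
apply: xget_unique => // k [Kk k_min].
have gap0 : `|k - p| ^+ 2 + 2 * ip (k - p) (p - y) <= 0.
  by rewrite -dist_gap // subr_le0 k_min.
have /eqP : `|k - p| ^+ 2 = 0.
  by have := sqr_ge0 `|k - p|; have := obtuse k Kk; lra.
by rewrite expf_eq0 /= normr_eq0 subr_eq0 => /eqP.
Qed.

Lemma proj_translate_argmin (C : set H) (a : R) (v g : H) :
  0 <= a -> argmin C (fun c => ip c (- v)) g ->
  proj_onto (translate C (- (a *: v) - g)) 0 = - (a *: v).
Proof.
move=> a_ge0 [Cg g_min]; apply: proj_onto_eq.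
  by exists g => //; rewrite addrCA subrr addr0.
move=> _ [c Cc <-].
have -> : c + (- (a *: v) - g) - - (a *: v) = c - g.
  by rewrite addrA addrAC addrK.
rewrite subr0 -scalerN ipC ipZl ipC ipBl.
by rewrite mulr_ge0 // subr_ge0 g_min.
Qed.

Lemma proj_Gsecond (m : nat) (grad : 'I_m -> H -> H) (alpha t : R) (u v w : H) :
  0 <= alpha / t -> Gsecond ip grad alpha t u v w ->
  proj_onto (translate (Cset grad u) w) 0 = - ((alpha / t) *: v).
Proof. by move=> a_ge0 [g g_argmin <-]; exact: proj_translate_argmin. Qed.

End InnerProduct.

Lemma ae_lebesgue_neq (R : realType) (a : R) :
  \forall t \ae (@lebesgue_measure R), t != a.
Proof.
exists [set a]; split; [exact: measurable_set1 | exact: lebesgue_measure_set1 |].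
by move=> t /negP; rewrite negbK => /eqP.
Qed.

Theorem theorem3p9 (R : realType) (H : completeNormedModType R)
  (ip : H -> H -> R) (m : nat) (f : 'I_m -> H -> R) (grad : 'I_m -> H -> H)
  (alpha t0 : R) (x0 v0 : H) (u v : R -> H) :
  is_inner_product ip ->
  (forall i, convex_fun (f i) /\ is_C1_gradient ip (f i) (grad i)) ->
  0 < alpha -> 0 < t0 ->
  loc_abs_cont u t0 -> loc_abs_cont v t0 ->
  (\forall t \ae (@lebesgue_measure R), t0 < t ->
     [/\ derivable u t 1, derivable v t 1, derive1 u t = v t &
         Gsecond ip grad alpha t (u t) (v t) (derive1 v t)]) ->
  u t0 = x0 -> v t0 = v0 ->
  [/\ u t0 = x0, v t0 = v0 &
    \forall t \ae (@lebesgue_measure R), t0 <= t ->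
      [/\ derivable u t 1, derive1 u t = v t, derivable v t 1 &
          (alpha / t) *: derive1 u t
            + proj_onto (translate (Cset grad (u t)) (derive1 v t)) 0 = 0]].
Proof.
move=> ip_inner _ alpha_gt0 t0_gt0 _ _ inclusion u_t0 v_t0; split=> //.
apply: (filterS2 (F := almost_everywhere (@lebesgue_measure R)) _ _
  (ae_lebesgue_neq t0) inclusion) => t t_neq sol t0_le.
have t0_lt : t0 < t by rewrite lt_neqAle eq_sym t_neq.
have [du dv -> G_t] := sol t0_lt.
have t_gt0 := lt_trans t0_gt0 t0_lt.
split=> //; rewrite (proj_Gsecond ip_inner _ G_t) ?subrr //.
by rewrite ltW // divr_gt0.
Qed.
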